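(* Let $G=(V,E)$ be a finite connected simple graph with vertex-weight $m_0\colon V\to\mathbb{R}_{>0}$ and distance parameter $d\colon E\to\mathbb{R}_{>0}$; set $M=\sum_{u\in V}m_0(u)$ and $D^2=\sum_{uv\in E}d(uv)^2$. Then $$\delta(G,m_0,d)=\max\Big\{1-\frac{D^2/M}{\sigma(G,m_0,d)},\,0\Big\}.$$
   Context: Edges are unordered pairs; $v\sim u$ means $uv\in E$; $\|\cdot\|$ is the Euclidean norm on $\mathbb{R}^{|V|}$. $\mathrm{bar}(\varphi)=\frac1M\sum_u m_0(u)\varphi(u)$. $\delta(G,m_0,d)=\inf\|\mathrm{bar}(\varphi)\|^2$ over all $\varphi\colon V\to\mathbb{R}^{|V|}$ with $\sum_u m_0(u)\|\varphi(u)\|^2=M$ and $\|\varphi(u)-\varphi(v)\|\le d(uv)$ for all $uv\in E$. For an edge-weight $m_1\colon E\to\mathbb{R}_{\ge0}$ with $(V,\{uv:m_1(uv)>0\})$ connected, the Laplacian is $(\Delta_{(m_0,m_1)}f)(u)=\frac{1}{m_0(u)}\big[(\sum_{v\sim u}m_1(uv))f(u)-\sum_{v\sim u}m_1(uv)f(v)\big]$ and $\lambda_1(G,(m_0,m_1))$ is its smallest positive eigenvalue, equivalently $\inf_f\frac{\sum_{uv}m_1(uv)(f(u)-f(v))^2}{\sum_u m_0(u)(f(u)-\bar f)^2}$ over nonconstant $f$, $\bar f=\frac1M\sum_u m_0(u)f(u)$. $\sigma(G,m_0,d)=\sup_{m_1}\lambda_1(G,(m_0,m_1))$ over all such edge-weights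 $m_1$ with $\sum_{uv\in E}m_1(uv)d(uv)^2=D^2$. *)

From HB Require Import structures.
From mathcomp Require Import all_boot all_order all_algebra.
From mathcomp Require Import all_classical all_reals.
Set Implicit Arguments. Unset Strict Implicit. Unset Printing Implicit Defensive.
Import Order.TTheory GRing.Theory Num.Theory.
Local Open Scope ring_scope.

Definition simple_graph (V : finType) (E : {set {set V}}) : Prop :=
  forall e, e \in E -> #|e| = 2%N.

Definition adj (V : finType) (E : {set {set V}}) : rel V :=
  fun u v => (u != v) && ([set u; v] \in E).

Definition connected_graph (V : finType) (E : {set {set V}}) : Prop :=
  forall u v : V, connect (adj E) u v.

Section Defs.
Variable R : realType.
Variable V : finType.

Definition total_mass (m0 : V -> R) : R := \sum_u m0 u.

Definition Dsq (E : {set {set V}}) (d : {set V} -> R) : R :=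
  \sum_(e in E) d e ^+ 2.

Definition enorm (x : 'rV[R]_#|V|) : R := Num.sqrt (\sum_i x ord0 i ^+ 2).

Definition bar (m0 : V -> R) (phi : V -> 'rV[R]_#|V|) : 'rV[R]_#|V| :=
  (total_mass m0)^-1 *: \sum_u m0 u *: phi u.

Definition admissible_embedding (E : {set {set V}}) (m0 : V -> R)
    (d : {set V} -> R) (phi : V -> 'rV[R]_#|V|) : Prop :=
  \sum_u m0 u * enorm (phi u) ^+ 2 = total_mass m0 /\
  forall u v, [set u; v] \in E -> u != v -> enorm (phi u - phi v) <= d [set u; v].

Definition delta (E : {set {set V}}) (m0 : V -> R) (d : {set V} -> R) : R :=
  inf [set enorm (bar m0 phi) ^+ 2 | phi in admissible_embedding E m0 d]%classic.

Definition mean (m0 : V -> R) (f : V -> R) : R :=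
  (total_mass m0)^-1 * \sum_u m0 u * f u.

Definition rayleigh (E : {set {set V}}) (m0 : V -> R) (m1 : {set V} -> R)
    (f : V -> R) : R :=
  (\sum_(e in E) m1 e * (\sum_(u in e) \sum_(v in e | u != v) (f u - f v) ^+ 2) / 2%:R)
  / (\sum_u m0 u * (f u - mean m0 f) ^+ 2).

Definition nonconstant (f : V -> R) : Prop := exists u v, f u != f v.

Definition lambda1 (E : {set {set V}}) (m0 : V -> R) (m1 : {set V} -> R) : R :=
  inf [set rayleigh E m0 m1 f | f in nonconstant]%classic.

Definition support_edges (E : {set {set V}}) (m1 : {set V} -> R) : {set {set V}} :=
  [set e in E | 0 < m1 e].

Definition admissible_edge_weight (E : {set {set V}}) (d : {set V} -> R)
    (m1 : {set V} -> R) : Prop :=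
  (forall e, e \in E -> 0 <= m1 e) /\
  connected_graph (support_edges E m1) /\
  \sum_(e in E) m1 e * d e ^+ 2 = Dsq E d.

Definition sigma (E : {set {set V}}) (m0 : V -> R) (d : {set V} -> R) : R :=
  sup [set lambda1 E m0 m1 | m1 in admissible_edge_weight E d]%classic.

End Defs.

From mathcomp Require Import all_boot all_order all_algebra.
From mathcomp Require Import all_classical all_reals.
From mathcomp Require Import sequences exp.
From mathcomp Require Import ring lra.
Import Order.TTheory GRing.Theory Num.Theory.
Local Open Scope ring_scope.
Set Implicit Arguments. Unset Strict Implicit. Unset Printing Implicit Defensive.

(* Lower bound: for an admissible embedding phi the mass identity
   M = M |bar phi|^2 + sum_i Var(phi_i) and the Rayleigh quotient give
   lambda1(m1) * sum_i Var(phi_i) <= sum_e m1(e) |phi u - phi v|^2 <= D^2 for every admissible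
   edge weight m1, hence |bar phi|^2 >= 1 - D^2 / (M sigma).
   Upper bound: sigma / D^2 is the value of a zero-sum game between distributions q on the
   edges and normalised functions g, with payoff sum_e q(e) (g u - g v)^2 / d(e)^2.  Testing
   lambda1 on the weight D^2 q / d^2 (mixed with a little uniform weight to keep it admissible)
   gives every q an answer of payoff close to sigma / D^2.  Playing multiplicative weights
   against these answers yields g_1, ..., g_N whose stacked values psi u = (g_t u)_t / sqrt N
   form a centred embedding of unit mass stretching every edge e by at most about
   (sigma / D^2) d(e)^2.  Householder reflections bring psi into R^|V| without changing its Gram
   matrix, and a rescaling followed by a shift along a unit vector turns it into an admissible
   embedding with |bar phi|^2 close to max(1 - D^2 / (M sigma), 0). *)

Lemma ler_sum_term (R : numDomainType) (I : finType) (P : pred I) (F : I -> R) i :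
  (forall j, P j -> 0 <= F j) -> P i -> F i <= \sum_(j | P j) F j.
Proof.
move=> F_ge0 Pi; rewrite (bigD1 i) //= lerDl sumr_ge0 // => j /andP[Pj _].
exact: F_ge0.
Qed.

(** * Multiplicative weights *)

Section MultiplicativeWeights.
Variable R : realType.

Lemma expR_le_quadratic (y : R) : 0 <= y <= 2^-1 -> expR y <= 1 + y + 2 * y ^+ 2.
Proof.
case/andP=> y_ge0 y_le.
have y_lt1 : 0 < 1 - y by lra.
have -> : expR y = (expR (- y))^-1 by rewrite expRN invrK.
apply: (@le_trans _ _ (1 - y)^-1).
  by rewrite lef_pV2 ?posrE ?expR_gt0 // -[1 - y]/(1 + - y) expR_ge1Dx.
rewrite -[X in X <= _]mul1r ler_pdivrMr //.
have : 0 <= y ^+ 2 * (1 - 2 * y) by rewrite mulr_ge0 ?sqr_ge0 //; lra.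
nra.
Qed.

Variables (T : finType) (E : {set T}).

Definition distribution (q : T -> R) :=
  (forall e, e \in E -> 0 <= q e) /\ \sum_(e in E) q e = 1.

Variables (X : Type) (good : X -> Prop) (payoff : X -> T -> R) (v eta : R).
Hypothesis E_gt0 : (0 < #|E|)%N.
Hypothesis eta_gt0 : 0 < eta.
Hypothesis eta_le : eta <= 2^-1.
Hypothesis payoff01 : forall x e, good x -> e \in E -> 0 <= payoff x e <= 1.

Definition potential (S : T -> R) := \sum_(e in E) expR (eta * S e).

Definition gibbs (S : T -> R) : T -> R := fun e => expR (eta * S e) / potential S.

Lemma expR_le_potential S e : e \in E -> expR (eta * S e) <= potential S.
Proof. by move=> eE; apply: ler_sum_term eE => f _; exact: expR_ge0. Qed.

Lemma potential_gt0 S : 0 < potential S.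
Proof.
case/card_gt0P: E_gt0 => e eE.
exact: lt_le_trans (expR_gt0 _) (expR_le_potential S eE).
Qed.

Lemma gibbs_distribution S : distribution (gibbs S).
Proof.
split; first by move=> e _; rewrite divr_ge0 ?expR_ge0 // ltW ?potential_gt0.
by rewrite -mulr_suml mulfV // gt_eqF ?potential_gt0.
Qed.

Variable respond : (T -> R) -> X.
Hypothesis respondP : forall q, distribution q ->
  good (respond q) /\ \sum_(e in E) q e * payoff (respond q) e <= v.

Fixpoint cumulative t : T -> R :=
  if t is t'.+1 then
    fun e => cumulative t' e + payoff (respond (gibbs (cumulative t'))) e
  else fun _ => 0.

Definition play t := respond (gibbs (cumulative t)).

Lemma play_good t : good (play t).
Proof. exact: (respondP (gibbs_distribution _)).1. Qed.

Lemma cumulativeE N e : cumulative N e = \sum_(t < N) payoff (play t) e.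
Proof. by elim: N => [|N IH]; rewrite ?big_ord0 // big_ord_recr /= IH. Qed.

Lemma expR_payoff_le x e : good x -> e \in E ->
  expR (eta * payoff x e) <= 1 + 2 * eta ^+ 2 + eta * payoff x e.
Proof.
move=> gx eE; have /andP[p_ge0 p_le1] := payoff01 gx eE.
have y_ge0 : 0 <= eta * payoff x e by rewrite mulr_ge0 // ltW.
have y_le : eta * payoff x e <= eta by rewrite ler_piMr // ltW.
have : (eta * payoff x e) ^+ 2 <= eta ^+ 2 by rewrite ler_sqr ?nnegrE // ltW.
have := @expR_le_quadratic (eta * payoff x e); rewrite y_ge0 (le_trans y_le) //=.
lra.
Qed.

Lemma potential_step t :
  potential (cumulative t.+1) <= potential (cumulative t) * expR (eta * v + 2 * eta ^+ 2).
Proof.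
set S := cumulative t; set Phi := potential S.
pose W := \sum_(e in E) expR (eta * S e) * payoff (play t) e.
have Phi_gt0 : 0 < Phi := potential_gt0 S.
have value : W <= Phi * v.
  rewrite /W (eq_bigr (fun e => Phi * (gibbs S e * payoff (play t) e))); last first.
    by move=> e _; rewrite /gibbs -/Phi; field; rewrite gt_eqF.
  by rewrite -mulr_sumr ler_pM2l //; exact: (respondP (gibbs_distribution S)).2.
have step : potential (cumulative t.+1) <= Phi * (1 + 2 * eta ^+ 2) + eta * W.
  rewrite /Phi /potential /W mulr_suml mulr_sumr -big_split; apply: ler_sum => e eE /=.
  have -> : expR (eta * S e) * (1 + 2 * eta ^+ 2)
      + eta * (expR (eta * S e) * payoff (play t) e)
      = expR (eta * S e) * (1 + 2 * eta ^+ 2 + eta * payoff (play t) e) by ring.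
  rewrite mulrDr expRD ler_wpM2l ?expR_ge0 //; exact: expR_payoff_le (play_good t) eE.
apply: le_trans step (le_trans _ (ler_wpM2l (ltW Phi_gt0) (expR_ge1Dx _))).
have := ler_wpM2l (ltW eta_gt0) value; lra.
Qed.

Lemma potential_bound N :
  potential (cumulative N) <= #|E|%:R * expR (N%:R * (eta * v + 2 * eta ^+ 2)).
Proof.
elim: N => [|N IH].
  rewrite mul0r expR0 mulr1 /potential /=.
  by rewrite (eq_bigr (fun=> 1)) ?sumr_const // => e _; rewrite mulr0 expR0.
apply: (le_trans (potential_step N)).
rewrite -[N.+1]addn1 natrD (mulrDl N%:R) mul1r (expRD (N%:R * _)) mulrA ler_wpM2r ?expR_ge0 //.
Qed.

Lemma play_regret N e : e \in E ->
  \sum_(t < N) payoff (play t) e <= N%:R * v + #|E|%:R / eta + 2 * eta * N%:R.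
Proof.
move=> eE; rewrite -cumulativeE.
have : expR (eta * cumulative N e) <= expR (#|E|%:R + N%:R * (eta * v + 2 * eta ^+ 2)).
  apply: le_trans (expR_le_potential _ eE) _.
  apply: (le_trans (potential_bound N)); rewrite expRD ler_wpM2r ?expR_ge0 //.
  by apply: le_trans (expR_ge1Dx _); rewrite lerDr.
rewrite ler_expR => bound; rewrite -(ler_pM2l eta_gt0).
have -> : eta * (N%:R * v + #|E|%:R / eta + 2 * eta * N%:R)
        = #|E|%:R + N%:R * (eta * v + 2 * eta ^+ 2) by field; rewrite gt_eqF.
exact: bound.
Qed.

End MultiplicativeWeights.

Lemma multiplicative_weights (R : realType) (T : finType) (E : {set T}) (X : Type)
    (good : X -> Prop) (payoff : X -> T -> R) (v eta : R) :
  (0 < #|E|)%N -> 0 < eta -> eta <= 2^-1 ->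
  (forall x e, good x -> e \in E -> 0 <= payoff x e <= 1) ->
  (forall q, distribution E q ->
     exists x, good x /\ \sum_(e in E) q e * payoff x e <= v) ->
  exists play : nat -> X, (forall t, good (play t)) /\
    forall N e, e \in E ->
      \sum_(t < N) payoff (play t) e <= N%:R * v + #|E|%:R / eta + 2 * eta * N%:R.
Proof.
move=> E_gt0 eta_gt0 eta_le payoff01 oracle.
have [x0 _] := oracle _ (gibbs_distribution eta E_gt0 (fun=> 0)).
have /boolp.choice[respond respondP] : forall q, exists x, distribution E q ->
    good x /\ \sum_(e in E) q e * payoff x e <= v.
  move=> q; case: (boolp.pselect (distribution E q)) => [/oracle[x xP]|nq].
    by exists x.
  by exists x0 => /nq.
exists (play E payoff eta respond); split=> [t|N e]; first exact: play_good respondP t.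
exact: (play_regret E_gt0 eta_gt0 eta_le payoff01 respondP).
Qed.

(** * Dimension reduction preserving Gram matrices *)

Section EuclideanRows.
Variable R : rcfType.

Definition sqnorm n (x : 'rV[R]_n) : R := \sum_i x 0 i ^+ 2.

Definition dot n (x y : 'rV[R]_n) : R := \sum_i x 0 i * y 0 i.

Lemma dotC n (x y : 'rV[R]_n) : dot x y = dot y x.
Proof. by apply: eq_bigr => i _; rewrite mulrC. Qed.

Lemma dotE n (x y : 'rV[R]_n) : dot x y = (x *m y^T) 0 0.
Proof. by rewrite mxE; apply: eq_bigr => i _; rewrite mxE. Qed.

Lemma dotZr n a (x y : 'rV[R]_n) : dot x (a *: y) = a * dot x y.
Proof. by rewrite mulr_sumr; apply: eq_bigr => i _; rewrite mxE mulrCA. Qed.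

Lemma dot_suml (I : finType) n (a : I -> R) (x : I -> 'rV[R]_n) y :
  dot (\sum_k a k *: x k) y = \sum_k a k * dot (x k) y.
Proof.
rewrite /dot (eq_bigr (fun i => \sum_k a k * (x k 0 i * y 0 i))) => [|i _].
  by rewrite exchange_big; apply: eq_bigr => k _; rewrite mulr_sumr.
by rewrite summxE mulr_suml; apply: eq_bigr => k _; rewrite mxE mulrA.
Qed.

Lemma sqnorm_ge0 n (x : 'rV[R]_n) : 0 <= sqnorm x.
Proof. by apply: sumr_ge0 => i _; exact: sqr_ge0. Qed.

Lemma sqnorm_eq0 n (x : 'rV[R]_n) : (sqnorm x == 0) = (x == 0).
Proof.
apply/idP/eqP => [/eqP x0|->]; last first.
  by rewrite /sqnorm big1 // => i _; rewrite mxE expr0n.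
apply/rowP => j; rewrite mxE; apply/eqP; rewrite -sqrf_eq0; apply/eqP.
by apply: (psumr_eq0P _ x0) => // i _; exact: sqr_ge0.
Qed.

Lemma dotxx n (x : 'rV[R]_n) : dot x x = sqnorm x.
Proof. by apply: eq_bigr => i _; rewrite expr2. Qed.

Lemma dotBr n (x y z : 'rV[R]_n) : dot x (y - z) = dot x y - dot x z.
Proof. by rewrite /dot -sumrB; apply: eq_bigr => i _; rewrite !mxE mulrBr. Qed.

Lemma sqnormZ n a (x : 'rV[R]_n) : sqnorm (a *: x) = a ^+ 2 * sqnorm x.
Proof. by rewrite mulr_sumr; apply: eq_bigr => i _; rewrite mxE exprMn. Qed.

Lemma sqnormD n (x y : 'rV[R]_n) : sqnorm (x + y) = sqnorm x + 2 * dot x y + sqnorm y.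
Proof.
rewrite /sqnorm /dot mulr_sumr -!big_split /=.
by apply: eq_bigr => i _; rewrite mxE; ring.
Qed.

Lemma sqnormB n (x y : 'rV[R]_n) : sqnorm (x - y) = sqnorm x - 2 * dot x y + sqnorm y.
Proof.
by rewrite -(scaleN1r y) sqnormD dotZr sqnormZ; ring.
Qed.

Definition reflection n (v : 'rV[R]_n) : 'M[R]_n :=
  1%:M - (2 / sqnorm v) *: (v^T *m v).

Lemma mul_reflection n (v x : 'rV[R]_n) :
  x *m reflection v = x - (2 * dot x v / sqnorm v) *: v.
Proof.
rewrite mulmxBr mulmx1 -scalemxAr mulmxA [x *m v^T]mx11_scalar mul_scalar_mx.
by rewrite scalerA -dotE mulrAC.
Qed.

Lemma sqnorm_reflection n (v x : 'rV[R]_n) : v != 0 ->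
  sqnorm (x *m reflection v) = sqnorm x.
Proof.
rewrite -sqnorm_eq0 => v0; rewrite mul_reflection sqnormB dotZr sqnormZ.
by field.
Qed.

Lemma dot_delta n (x : 'rV[R]_n) i : dot x (delta_mx 0 i) = x 0 i.
Proof.
rewrite /dot (bigD1 i) //= mxE !eqxx mulr1 big1 ?addr0 // => j /negbTE ji.
by rewrite mxE ji andbF mulr0.
Qed.

Lemma sqnorm_delta n (i : 'I_n) : sqnorm (delta_mx 0 i : 'rV[R]_n) = 1.
Proof. by rewrite -dotxx dot_delta mxE !eqxx. Qed.

Lemma householder n (w : 'rV[R]_n.+1) : w != 0 -> exists H : 'M[R]_n.+1,
  (forall x, sqnorm (x *m H) = sqnorm x) /\
  (forall x, dot x w = 0 -> (x *m H) 0 ord_max = 0).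
Proof.
move=> w0; set e := delta_mx 0 ord_max : 'rV[R]_n.+1; set wN := w 0 ord_max.
(* The sign of s makes v = w - s e nonzero; the reflection along v swaps w and s e, so it
   maps the orthogonal of w into that of e. *)
have [s [s2 s0 swN]] : exists s, [/\ s ^+ 2 = sqnorm w, s != 0 & s != wN].
  have r_gt0 : 0 < Num.sqrt (sqnorm w).
    by rewrite sqrtr_gt0 lt_def sqnorm_eq0 w0 sqnorm_ge0.
  have [rE|rN] := eqVneq (Num.sqrt (sqnorm w)) wN.
    exists (- Num.sqrt (sqnorm w)); rewrite sqrrN sqr_sqrtr ?sqnorm_ge0 //.
    split=> //; first by rewrite oppr_eq0 gt_eqF.
    by rewrite -rE; apply/eqP => rN; move: r_gt0; lra.
  by exists (Num.sqrt (sqnorm w)); rewrite sqr_sqrtr ?sqnorm_ge0 // gt_eqF.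
set v := w - s *: e.
have sqnorm_v : sqnorm v = 2 * s * (s - wN).
  by rewrite sqnormB dotZr dot_delta sqnormZ sqnorm_delta -s2 -/wN; ring.
have v0 : v != 0.
  by rewrite -sqnorm_eq0 sqnorm_v !mulf_neq0 ?pnatr_eq0 // subr_eq0.
exists (reflection v); split=> [x|x xw]; first exact: sqnorm_reflection.
rewrite mul_reflection sqnorm_v /v dotBr xw dotZr dot_delta !mxE !eqxx -/wN /=.
by field; rewrite s0 subr_eq0 swN.
Qed.

Lemma sqnorm_col'_max n (y : 'rV[R]_n.+1) :
  sqnorm (col' ord_max y) = sqnorm y - y 0 ord_max ^+ 2.
Proof.
rewrite [sqnorm y]big_ord_recr /= addrK; apply: eq_bigr => j _; rewrite mxE.
by congr (y 0 _ ^+ 2); apply: val_inj; exact: lift_max.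
Qed.

Lemma exists_orthogonal (I : finType) n (x : I -> 'rV[R]_n) : (#|I| < n)%N ->
  exists2 w : 'rV[R]_n, w != 0 & forall i, dot (x i) w = 0.
Proof.
move=> I_lt_n; pose A : 'M[R]_(#|I|, n) := \matrix_(k, j) x (enum_val k) 0 j.
have /rowV0Pn[w /sub_kermxP wA w0] : kermx A^T != 0.
  rewrite -mxrank_eq0 mxrank_ker subn_eq0 -ltnNge mxrank_tr.
  exact: leq_ltn_trans (rank_leq_row A) I_lt_n.
exists w => // i; rewrite dotC; transitivity ((w *m A^T) 0 (enum_rank i)).
  by rewrite mxE; apply: eq_bigr => j _; rewrite !mxE enum_rankK.
by rewrite wA mxE.
Qed.

(* By polarisation, this says that x and y have the same Gram matrix. *)
Definition same_gram (I : finType) p q (x : I -> 'rV[R]_p) (y : I -> 'rV[R]_q) :=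
  forall a : I -> R, sqnorm (\sum_i a i *: x i) = sqnorm (\sum_i a i *: y i).

Lemma same_gram_drop (I : finType) n (x : I -> 'rV[R]_n.+1) : (#|I| <= n)%N ->
  exists y : I -> 'rV[R]_n, same_gram x y.
Proof.
move=> I_le_n; have [w w0 xw] := exists_orthogonal x I_le_n.
have [H [H_iso H_last]] := householder w0.
exists (fun i => x i *m col' ord_max H) => a.
have -> : \sum_i a i *: (x i *m col' ord_max H) = col' ord_max ((\sum_i a i *: x i) *m H).
  have -> : col' ord_max ((\sum_i a i *: x i) *m H) = (\sum_i a i *: x i) *m col' ord_max H.
    by apply/rowP => j; rewrite !mxE; apply: eq_bigr => k _; rewrite !mxE.
  by rewrite mulmx_suml; apply: eq_bigr => i _; rewrite scalemxAl.
rewrite sqnorm_col'_max H_iso H_last ?expr0n ?subr0 // dot_suml.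
by rewrite big1 // => i _; rewrite xw mulr0.
Qed.

Lemma same_gram_reduce (I : finType) k (x : I -> 'rV[R]_(k + #|I|)) :
  exists y : I -> 'rV[R]_#|I|, same_gram x y.
Proof.
elim: k x => [|k IH] x; first by exists x.
have [y xy] := same_gram_drop (x : I -> 'rV_(k + #|I|).+1) (leq_addl k #|I|).
by have [z yz] := IH y; exists z => a; rewrite xy yz.
Qed.

End EuclideanRows.

(** * Variance, energy and the first eigenvalue *)

Section Spectral.
Variables (R : realType) (V : finType).

Definition edge_energy (f : V -> R) (e : {set V}) : R :=
  (\sum_(u in e) \sum_(v in e | u != v) (f u - f v) ^+ 2) / 2.

Lemma edge_energy_ge0 f e : 0 <= edge_energy f e.
Proof.
by rewrite divr_ge0 // sumr_ge0 // => u _; rewrite sumr_ge0 // => v _; exact: sqr_ge0.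
Qed.

Lemma edge_energy_pair f a b : a != b -> edge_energy f [set a; b] = (f a - f b) ^+ 2.
Proof.
move=> ab; have ba : b != a by rewrite eq_sym.
rewrite /edge_energy big_setU1 ?inE //= big_set1.
rewrite (big_pred1 b) => [|x]; last first.
  rewrite !inE; case: (eqVneq x a) => [->|xa]; first by rewrite (negbTE ab).
  by rewrite andbT.
rewrite (big_pred1 a) => [|x]; last first.
  rewrite !inE; case: (eqVneq x b) => [->|xb]; first by rewrite (negbTE ba).
  by rewrite orbF andbT.
by rewrite -sqrrN opprB; field.
Qed.

Lemma edge_energy_affine a b f e :
  edge_energy (fun u => a * f u + b) e = a ^+ 2 * edge_energy f e.
Proof.
rewrite /edge_energy mulrA mulr_sumr; congr (_ / _); apply: eq_bigr => u _.
by rewrite mulr_sumr; apply: eq_bigr => v _; ring.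
Qed.

Variable m0 : V -> R.
Hypothesis V_gt0 : (0 < #|V|)%N.
Hypothesis m0_gt0 : forall u, 0 < m0 u.

Local Notation M := (total_mass m0).

Definition variance (f : V -> R) : R := \sum_u m0 u * (f u - mean m0 f) ^+ 2.

Lemma total_mass_gt0 : 0 < M.
Proof.
case/card_gt0P: V_gt0 => u _; apply: lt_le_trans (m0_gt0 u) _.
by apply: (ler_sum_term (P := xpredT)) => // v _; exact: ltW.
Qed.

Let M_neq0 : M != 0. Proof. by rewrite gt_eqF // total_mass_gt0. Qed.

Lemma sum_mass_mean f : \sum_u m0 u * f u = M * mean m0 f.
Proof. by rewrite /mean mulVKf. Qed.

Lemma mean_affine a b f : mean m0 (fun u => a * f u + b) = a * mean m0 f + b.
Proof.
rewrite /mean (eq_bigr (fun u => a * (m0 u * f u) + b * m0 u)); last first.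
  by move=> u _; ring.
by rewrite big_split -!mulr_sumr /= -/M; field.
Qed.

Lemma mean_const c : mean m0 (fun=> c) = c.
Proof. by rewrite /mean -mulr_suml -/M mulrA mulVf ?mul1r. Qed.

Lemma variance_affine a b f : variance (fun u => a * f u + b) = a ^+ 2 * variance f.
Proof. by rewrite /variance mean_affine mulr_sumr; apply: eq_bigr => u _; ring. Qed.

Lemma variance_ge0 f : 0 <= variance f.
Proof. by apply: sumr_ge0 => u _; rewrite mulr_ge0 ?sqr_ge0 // ltW. Qed.

Lemma sum_mass_sqr f c :
  \sum_u m0 u * (f u - c) ^+ 2 = M * (mean m0 f - c) ^+ 2 + variance f.
Proof.
have expand x : \sum_u m0 u * (f u - x) ^+ 2
    = \sum_u m0 u * f u ^+ 2 - 2 * x * \sum_u m0 u * f u + M * x ^+ 2.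
  rewrite mulr_sumr /M mulr_suml -sumrB -big_split /=.
  by apply: eq_bigr => u _; ring.
by rewrite /variance !expand (sum_mass_mean f); ring.
Qed.

Lemma variance_le_sum_sqr f c : variance f <= \sum_u m0 u * (f u - c) ^+ 2.
Proof. by rewrite sum_mass_sqr lerDr mulr_ge0 ?sqr_ge0 // ltW ?total_mass_gt0. Qed.

Lemma nonconstant_variance f : nonconstant f <-> 0 < variance f.
Proof.
split=> [[u [v fuv]]|var_gt0].
  rewrite lt_def variance_ge0 andbT; apply: contraNneq fuv => var0.
  have term_ge0 x : true -> 0 <= m0 x * (f x - mean m0 f) ^+ 2.
    by rewrite mulr_ge0 ?sqr_ge0 // ltW.
  have f_mean w : f w = mean m0 f.
    move: (psumr_eq0P term_ge0 var0 (i := w) isT) => /eqP.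
    by rewrite mulf_eq0 gt_eqF //= sqrf_eq0 subr_eq0 => /eqP.
  by rewrite !f_mean.
apply: boolp.contrapT => fconst; move: var_gt0.
case/card_gt0P: V_gt0 => u _.
have -> : f = fun=> f u.
  apply: boolp.funext => v; apply: boolp.contrapT => fvu; apply: fconst.
  by exists v, u; apply/eqP.
by rewrite /variance mean_const big1 ?ltxx // => v _; rewrite subrr expr0n mulr0.
Qed.

Lemma variance_eq0 f : ~ nonconstant f -> variance f = 0.
Proof.
move=> fc; apply/eqP; rewrite eq_le variance_ge0 andbT leNgt.
by apply/negP => /(nonconstant_variance f).2.
Qed.

Variables (E : {set {set V}}) (d : {set V} -> R).
Hypothesis E_simple : simple_graph E.
Hypothesis E_connected : connected_graph E.
Hypothesis d_gt0 : forall e, e \in E -> 0 < d e.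

Local Notation D2 := (Dsq E d).
Local Notation spectral_bound := (Num.max (1 - D2 / M / sigma E m0 d) 0).

Definition nonneg_weight (m1 : {set V} -> R) := forall e, e \in E -> 0 <= m1 e.

Lemma rayleighE m1 f :
  rayleigh E m0 m1 f = (\sum_(e in E) m1 e * edge_energy f e) / variance f.
Proof. by congr (_ / _); apply: eq_bigr => e _; rewrite mulrA. Qed.

Lemma rayleigh_ge0 m1 f : nonneg_weight m1 -> 0 <= rayleigh E m0 m1 f.
Proof.
move=> m1_ge0; rewrite rayleighE divr_ge0 ?variance_ge0 ?sumr_ge0 // => e eE.
by rewrite mulr_ge0 ?m1_ge0 ?edge_energy_ge0.
Qed.

Lemma lambda1_le_rayleigh m1 f : nonneg_weight m1 -> nonconstant f ->
  lambda1 E m0 m1 <= rayleigh E m0 m1 f.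
Proof.
move=> m1_ge0 fnc; apply: ge_inf; last by exists f.
by exists 0 => _ [g _ <-]; exact: rayleigh_ge0.
Qed.

Lemma lambda1_variance_le m1 f : nonneg_weight m1 ->
  lambda1 E m0 m1 * variance f <= \sum_(e in E) m1 e * edge_energy f e.
Proof.
move=> m1_ge0; case: (boolp.pselect (nonconstant f)) => [fnc|fc].
  have var_gt0 := (nonconstant_variance f).1 fnc.
  rewrite -ler_pdivlMr // -rayleighE; exact: lambda1_le_rayleigh.
rewrite variance_eq0 // mulr0 sumr_ge0 // => e eE.
by rewrite mulr_ge0 ?m1_ge0 ?edge_energy_ge0.
Qed.

Lemma simple_edgeP e : e \in E -> exists a b, a != b /\ e = [set a; b].
Proof. by move=> eE; have /eqP/cards2P[a [b [ab ->]]] := E_simple eE; exists a, b. Qed.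

Definition energy (f : V -> R) : R := \sum_(e in E) edge_energy f e.

Lemma energy_ge0 f : 0 <= energy f.
Proof. by apply: sumr_ge0 => e _; exact: edge_energy_ge0. Qed.

Lemma adj_energy f a b : adj E a b -> (f a - f b) ^+ 2 <= energy f.
Proof.
case/andP=> ab abE; rewrite -(edge_energy_pair f ab).
by apply: ler_sum_term abE => e _; exact: edge_energy_ge0.
Qed.

Lemma path_energy f x p : path (adj E) x p ->
  `|f x - f (last x p)| <= (size p)%:R * Num.sqrt (energy f).
Proof.
elim: p x => [|y p IH] x /=; first by rewrite subrr normr0 mul0r.
case/andP=> xy yp; apply: (le_trans (ler_distD (f y) _ _)).
rewrite -addn1 natrD mulrDl mul1r addrC lerD ?IH //.
by rewrite -sqrtr_sqr ler_sqrt ?energy_ge0 ?adj_energy.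
Qed.

Lemma poincare : exists2 C, 0 < C & forall f, variance f <= C * energy f.
Proof.
case/card_gt0P: V_gt0 => z _.
have /fin_all_exists[L HL] : forall u, exists L : nat,
    forall f, `|f u - f z| <= L%:R * Num.sqrt (energy f).
  move=> u; have /connectP[p up ->] := E_connected u z.
  by exists (size p) => f; exact: path_energy.
exists (\sum_u m0 u * (L u)%:R ^+ 2 + 1) => [|f].
  by rewrite ltr_wpDl ?ltr01 // sumr_ge0 // => u _; rewrite mulr_ge0 ?sqr_ge0 // ltW.
apply: (le_trans (variance_le_sum_sqr f (f z))).
rewrite mulrDl mul1r mulr_suml -[X in X <= _]addr0; apply: lerD (energy_ge0 f).
apply: ler_sum => u _; rewrite -mulrA ler_pM2l //.
rewrite -real_normK ?num_real // -[energy f]sqr_sqrtr ?energy_ge0 // -exprMn.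
by rewrite ler_sqr ?nnegrE ?mulr_ge0 ?sqrtr_ge0 ?HL.
Qed.

Lemma admissible_unit : admissible_edge_weight E d (fun=> 1).
Proof.
split=> [e _|]; first exact: ler01.
split; last by apply: eq_bigr => e _; rewrite mul1r.
suff -> : support_edges E (fun=> 1 : R) = E by [].
by apply/setP => e; rewrite inE ltr01 andbT.
Qed.

Lemma admissible_weight_le m1 e : admissible_edge_weight E d m1 -> e \in E ->
  m1 e <= D2 / d e ^+ 2.
Proof.
case=> m1_ge0 [_ m1_sum] eE; rewrite ler_pdivlMr ?exprn_gt0 ?d_gt0 // -m1_sum.
apply: (ler_sum_term (F := fun e => m1 e * d e ^+ 2)) eE => f fE.
by rewrite mulr_ge0 ?m1_ge0 ?sqr_ge0.
Qed.

Lemma sigma_le b : (forall m1, admissible_edge_weight E d m1 -> lambda1 E m0 m1 <= b) ->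
  sigma E m0 d <= b.
Proof.
move=> lambda1_le; apply: ge_sup => [|_ [m1 m1_adm <-]]; last exact: lambda1_le.
by exists (lambda1 E m0 (fun=> 1)), (fun=> 1); first exact: admissible_unit.
Qed.

(** * Embeddings *)

Lemma enorm_sqr (x : 'rV[R]_#|V|) : enorm x ^+ 2 = sqnorm x.
Proof. by rewrite sqr_sqrtr // sqnorm_ge0. Qed.

Definition coord n (phi : V -> 'rV[R]_n) (i : 'I_n) : V -> R := fun u => phi u 0 i.

Lemma bar_coord (phi : V -> 'rV[R]_#|V|) i : bar m0 phi 0 i = mean m0 (coord phi i).
Proof.
by rewrite /bar mxE summxE /mean; congr (_ * _); apply: eq_bigr => u _; rewrite mxE.
Qed.

Lemma sum_mass_sqnorm (phi : V -> 'rV[R]_#|V|) :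
  \sum_u m0 u * sqnorm (phi u) = M * sqnorm (bar m0 phi) + \sum_i variance (coord phi i).
Proof.
rewrite /sqnorm mulr_sumr -big_split /=; under eq_bigr do rewrite mulr_sumr.
rewrite exchange_big /=; apply: eq_bigr => i _; rewrite bar_coord.
have := sum_mass_sqr (coord phi i) 0; rewrite subr0 => <-.
by apply: eq_bigr => u _; rewrite subr0.
Qed.

Lemma sqnormB_energy n (phi : V -> 'rV[R]_n) a b : a != b ->
  sqnorm (phi a - phi b) = \sum_i edge_energy (coord phi i) [set a; b].
Proof. by move=> ab; apply: eq_bigr => i _; rewrite edge_energy_pair // !mxE. Qed.

Lemma Dsq_ge0 : 0 <= D2.
Proof. by apply: sumr_ge0 => e _; exact: sqr_ge0. Qed.

Lemma coord_variance_le (phi : V -> 'rV[R]_#|V|) m1 :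
  admissible_embedding E m0 d phi -> admissible_edge_weight E d m1 ->
  lambda1 E m0 m1 * \sum_i variance (coord phi i) <= D2.
Proof.
case=> _ phi_lip [m1_ge0 [_ m1_sum]].
rewrite mulr_sumr.
apply: le_trans (ler_sum _ (fun i _ => lambda1_variance_le (coord phi i) m1_ge0)) _.
rewrite exchange_big /= -m1_sum; apply: ler_sum => e eE.
rewrite -mulr_sumr ler_wpM2l ?m1_ge0 //.
have [a [b [ab eab]]] := simple_edgeP eE; rewrite eab in eE *.
rewrite -sqnormB_energy // -enorm_sqr.
by rewrite ler_sqr ?nnegrE ?sqrtr_ge0 ?phi_lip ?(ltW (d_gt0 eE)).
Qed.

Lemma coord_variance_sigma_le (phi : V -> 'rV[R]_#|V|) :
  admissible_embedding E m0 d phi ->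
  (\sum_i variance (coord phi i)) * sigma E m0 d <= D2.
Proof.
move=> phi_adm; set W := \sum_i _.
have : 0 <= W by apply: sumr_ge0 => i _; exact: variance_ge0.
rewrite le_eqVlt => /orP[/eqP<-|W_gt0]; first by rewrite mul0r Dsq_ge0.
rewrite mulrC -ler_pdivlMr //; apply: sigma_le => m1 m1_adm.
by rewrite ler_pdivlMr //; exact: coord_variance_le.
Qed.

Definition normalized (g : V -> R) := mean m0 g = 0 /\ variance g = 1.

Lemma normalize f : nonconstant f ->
  exists2 g, normalized g & forall e, edge_energy g e = edge_energy f e / variance f.
Proof.
move=> fnc; have var_gt0 := (nonconstant_variance f).1 fnc.
set a := (Num.sqrt (variance f))^-1.
have a2 : a ^+ 2 = (variance f)^-1 by rewrite exprVn sqr_sqrtr // ltW.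
exists (fun u => a * f u + - (a * mean m0 f)).
  split; first by rewrite mean_affine addrN.
  by rewrite variance_affine a2 mulVf ?gt_eqF.
by move=> e; rewrite edge_energy_affine a2 mulrC.
Qed.

Lemma normalized_sqr_le g u : normalized g -> g u ^+ 2 <= (m0 u)^-1.
Proof.
case=> g_mean g_var; rewrite -div1r ler_pdivlMr // mulrC -g_var /variance g_mean.
rewrite -[g u]subr0; apply: (ler_sum_term (P := xpredT)) => // v _.
by rewrite mulr_ge0 ?sqr_ge0 // ltW.
Qed.

Definition payoff_bound : R := 4 * (\sum_u (m0 u)^-1) * \sum_(e in E) (d e ^+ 2)^-1.

Lemma payoff_le g e : normalized g -> e \in E ->
  edge_energy g e / d e ^+ 2 <= payoff_bound.
Proof.
move=> g_norm eE; have [a [b [ab eab]]] := simple_edgeP eE.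
have inv_m0_le u : (m0 u)^-1 <= \sum_v (m0 v)^-1.
  by apply: (ler_sum_term (P := xpredT)) => // v _; rewrite invr_ge0 ltW.
rewrite /payoff_bound ler_pM ?edge_energy_ge0 ?invr_ge0 ?sqr_ge0 //; last first.
  by apply: (ler_sum_term (F := fun e => (d e ^+ 2)^-1)) => // f _; rewrite invr_ge0 sqr_ge0.
rewrite eab edge_energy_pair //.
have := normalized_sqr_le a g_norm; have := normalized_sqr_le b g_norm.
have := inv_m0_le a; have := inv_m0_le b; have := sqr_ge0 (g a + g b); nra.
Qed.

Definition balanced n w (chi : V -> 'rV[R]_n) :=
  [/\ \sum_u m0 u *: chi u = 0, \sum_u m0 u * sqnorm (chi u) = 1 &
      forall a b, [set a; b] \in E -> a != b ->
        sqnorm (chi a - chi b) <= w * d [set a; b] ^+ 2].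

Lemma sum_indicator n (chi : V -> 'rV[R]_n) u : \sum_v (v == u)%:R *: chi v = chi u.
Proof.
rewrite (bigD1 u) //= eqxx scale1r big1 ?addr0 // => v /negbTE->.
exact: scale0r.
Qed.

Lemma sum_indicatorB n (chi : V -> 'rV[R]_n) a b :
  \sum_v ((v == a)%:R - (v == b)%:R) *: chi v = chi a - chi b.
Proof. by under eq_bigr do rewrite scalerBl; rewrite sumrB !sum_indicator. Qed.

Lemma same_gram_balanced p q w (chi : V -> 'rV[R]_p) (psi : V -> 'rV[R]_q) :
  same_gram chi psi -> balanced w chi -> balanced w psi.
Proof.
move=> gram [center mass lip]; split.
- by apply/eqP; rewrite -sqnorm_eq0 -gram sqnorm_eq0 center.
- rewrite -mass; apply: eq_bigr => u _.
  by rewrite -(sum_indicator psi) -gram sum_indicator.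
- by move=> a b abE ab; rewrite -sum_indicatorB -gram sum_indicatorB lip.
Qed.

Lemma sum_mass_sqr_normalized g : normalized g -> \sum_u m0 u * g u ^+ 2 = 1.
Proof.
by case=> g_mean g_var; rewrite -g_var /variance g_mean; apply: eq_bigr => u _; rewrite subr0.
Qed.

Lemma balanced_rows N w (gs : nat -> V -> R) : (0 < N)%N ->
  (forall t, normalized (gs t)) ->
  (forall e, e \in E -> \sum_(t < N) edge_energy (gs t) e <= N%:R * w * d e ^+ 2) ->
  balanced w (fun u => \row_(t < N) (gs t u / Num.sqrt N%:R)).
Proof.
move=> N_gt0 gs_norm gs_energy; set c := Num.sqrt N%:R.
have N_gt0' : 0 < N%:R :> R by rewrite ltr0n.
have c2 : c ^+ 2 = N%:R by rewrite sqr_sqrtr ?ltW.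
split.
- apply/rowP => t; rewrite summxE !mxE.
  under eq_bigr do rewrite !mxE mulrA.
  by rewrite -mulr_suml sum_mass_mean (gs_norm t).1 mulr0 mul0r.
- rewrite /sqnorm; under eq_bigr do rewrite mulr_sumr.
  rewrite exchange_big /= (eq_bigr (fun=> N%:R^-1)).
    by rewrite sumr_const card_ord -(mulr_natr (N%:R^-1)) mulVf ?gt_eqF.
  move=> t _; under eq_bigr do rewrite mxE expr_div_n c2 mulrA.
  by rewrite -mulr_suml sum_mass_sqr_normalized ?mul1r.
- move=> a b abE ab.
  rewrite /sqnorm (eq_bigr (fun t : 'I_N => edge_energy (gs t) [set a; b] / N%:R)); last first.
    by move=> t _; rewrite !mxE edge_energy_pair // -mulrBl expr_div_n c2.
  by rewrite -mulr_suml ler_pdivrMr // mulrC mulrA; exact: gs_energy.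
Qed.

Definition unit_row : 'rV[R]_#|V| := delta_mx 0 (Ordinal V_gt0).

Lemma enorm_le (x : 'rV[R]_#|V|) b : 0 <= b -> sqnorm x <= b ^+ 2 -> enorm x <= b.
Proof. by move=> b_ge0 xb; rewrite -(ger0_norm b_ge0) -sqrtr_sqr ler_sqrt ?sqr_ge0. Qed.

Lemma bar_const (x : 'rV[R]_#|V|) : bar m0 (fun=> x) = x.
Proof. by rewrite /bar -scaler_suml -/M scalerA mulVf ?scale1r. Qed.

Lemma admissible_shift w (chi : V -> 'rV[R]_#|V|) r :
  balanced w chi -> 0 <= r -> r ^+ 2 * w <= 1 -> r ^+ 2 <= M ->
  exists phi, admissible_embedding E m0 d phi /\ enorm (bar m0 phi) ^+ 2 = 1 - r ^+ 2 / M.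
Proof.
case=> center mass lip r_ge0 rw_le1 r2_le.
have M_gt0 := total_mass_gt0.
set c := Num.sqrt (1 - r ^+ 2 / M).
have c2 : c ^+ 2 = 1 - r ^+ 2 / M by rewrite sqr_sqrtr // subr_ge0 ler_pdivrMr // mul1r.
have center_coord : \sum_u m0 u * chi u 0 (Ordinal V_gt0) = 0.
  transitivity ((\sum_u m0 u *: chi u) 0 (Ordinal V_gt0)); last by rewrite center mxE.
  by rewrite summxE; apply: eq_bigr => u _; rewrite mxE.
(* As chi is centred, the shift by c adds exactly c^2 M to the mass and moves the
   barycentre to c *: unit_row. *)
have barE : bar m0 (fun u => r *: chi u + c *: unit_row) = c *: unit_row.
  rewrite /bar; under eq_bigr do rewrite scalerDr !scalerA (mulrC (m0 _)) -!scalerA.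
  rewrite big_split /= -!scaler_sumr center scaler0 add0r -scaler_suml -/M.
  by rewrite !scalerA mulKf ?gt_eqF.
exists (fun u => r *: chi u + c *: unit_row); split; first split.
- under eq_bigr do rewrite enorm_sqr sqnormD !sqnormZ dotZr dot_delta sqnorm_delta.
  rewrite (eq_bigr (fun u => r ^+ 2 * (m0 u * sqnorm (chi u))
      + 2 * c * r * (m0 u * chi u 0 (Ordinal V_gt0)) + c ^+ 2 * m0 u)); last first.
    by move=> u _; rewrite mxE; ring.
  by rewrite !big_split /= -!mulr_sumr mass center_coord -/M c2; field; rewrite gt_eqF.
- move=> a b abE ab; apply: enorm_le; first exact/ltW/d_gt0.
  rewrite opprD addrACA subrr addr0 -scalerBr sqnormZ.
  apply: le_trans (ler_wpM2l (sqr_ge0 r) (lip a b abE ab)) _.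
  by rewrite mulrA ler_piMl ?sqr_ge0.
- by rewrite barE enorm_sqr sqnormZ sqnorm_delta mulr1.
Qed.

Lemma admissible_of_balanced w (chi : V -> 'rV[R]_#|V|) : 0 < w -> balanced w chi ->
  exists phi, admissible_embedding E m0 d phi /\
    enorm (bar m0 phi) ^+ 2 = Num.max (1 - (M * w)^-1) 0.
Proof.
move=> w_gt0 chi_bal; have M_gt0 := total_mass_gt0.
have winv_ge0 : 0 <= w^-1 by rewrite invr_ge0 ltW.
have [wM|Mw] := leP w^-1 M.
  have [|||phi [phi_adm barE]] := admissible_shift (r := Num.sqrt w^-1) chi_bal.
  - exact: sqrtr_ge0.
  - by rewrite sqr_sqrtr // mulVf ?gt_eqF.
  - by rewrite sqr_sqrtr.
  exists phi; split => //; rewrite barE sqr_sqrtr // invfM mulrC.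
  by apply/esym/max_idPl; rewrite subr_ge0 ler_pdivrMl // mulr1.
have [|||phi [phi_adm barE]] := admissible_shift (r := Num.sqrt M) chi_bal.
- exact: sqrtr_ge0.
- by rewrite sqr_sqrtr ?(ltW M_gt0) // -ler_pdivlMr // div1r ltW.
- by rewrite sqr_sqrtr ?(ltW M_gt0).
exists phi; split => //; rewrite barE sqr_sqrtr ?(ltW M_gt0) // mulfV ?gt_eqF // subrr.
apply/esym/max_idPr; rewrite subr_le0 invfM.
by rewrite -ler_pdivrMl ?invr_gt0 // invrK mulr1 ltW.
Qed.

Lemma delta_le_bar phi : admissible_embedding E m0 d phi ->
  delta E m0 d <= enorm (bar m0 phi) ^+ 2.
Proof.
move=> phi_adm; apply: ge_inf; last by exists phi.
by exists 0 => _ [psi _ <-]; exact: sqr_ge0.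
Qed.

Lemma unit_row_admissible : admissible_embedding E m0 d (fun=> unit_row).
Proof.
split; first by apply: eq_bigr => u _; rewrite enorm_sqr sqnorm_delta mulr1.
move=> a b abE ab; rewrite subrr; apply: enorm_le; first exact/ltW/d_gt0.
by have := sqnorm_eq0 (0 : 'rV[R]_#|V|); rewrite eqxx => /eqP->; exact: sqr_ge0.
Qed.

Lemma enorm_bar_unit_row : enorm (bar m0 (fun=> unit_row)) ^+ 2 = 1.
Proof. by rewrite bar_const enorm_sqr sqnorm_delta. Qed.

Section Nontrivial.
Hypothesis V_gt1 : (1 < #|V|)%N.

Lemma exists_nonconstant : exists f : V -> R, nonconstant f.
Proof.
have /card_gt1P[x [y [_ _ xy]]] := V_gt1.
by exists (fun z => (z == x)%:R), x, y; rewrite eqxx (eq_sym y) (negbTE xy) oner_neq0.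
Qed.

Lemma card_edges_gt0 : (0 < #|E|)%N.
Proof.
have /card_gt1P[x [y [_ _ xy]]] := V_gt1; apply/card_gt0P.
have /connectP[[|z p] /= xzp yE] := E_connected x y; first by rewrite yE eqxx in xy.
by case/andP: xzp => /andP[_ xzE] _; exists [set x; z].
Qed.

Lemma Dsq_gt0 : 0 < D2.
Proof.
have /card_gt0P[e eE] := card_edges_gt0.
apply: lt_le_trans (exprn_gt0 2 (d_gt0 eE)) _.
by apply: (ler_sum_term (F := fun e => d e ^+ 2)) eE => f _; exact: sqr_ge0.
Qed.

Lemma sigma_ubound :
  has_ubound [set lambda1 E m0 m1 | m1 in admissible_edge_weight E d]%classic.
Proof.
have [f fnc] := exists_nonconstant.
exists ((\sum_(e in E) D2 / d e ^+ 2 * edge_energy f e) / variance f).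
move=> _ [m1 m1_adm <-]; apply: (le_trans (lambda1_le_rayleigh m1_adm.1 fnc)).
rewrite rayleighE ler_wpM2r ?invr_ge0 ?variance_ge0 //.
by apply: ler_sum => e eE; rewrite ler_wpM2r ?edge_energy_ge0 ?admissible_weight_le.
Qed.

Lemma lambda1_le_sigma m1 : admissible_edge_weight E d m1 -> lambda1 E m0 m1 <= sigma E m0 d.
Proof. by move=> m1_adm; apply: (ub_le_sup sigma_ubound); exists m1. Qed.

Lemma lambda1_unit_gt0 : 0 < lambda1 E m0 (fun=> 1).
Proof.
have [C C_gt0 varC] := poincare; apply: (@lt_le_trans _ _ C^-1); first by rewrite invr_gt0.
have [f fnc] := exists_nonconstant.
apply: lb_le_inf => [|_ [g gnc <-]]; first by exists (rayleigh E m0 (fun=> 1) f), f.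
have var_gt0 := (nonconstant_variance g).1 gnc.
rewrite rayleighE ler_pdivlMr // mulrC ler_pdivrMr // mulrC.
by under eq_bigr do rewrite mul1r; exact: varC.
Qed.

Lemma sigma_gt0 : 0 < sigma E m0 d.
Proof. exact: lt_le_trans lambda1_unit_gt0 (lambda1_le_sigma admissible_unit). Qed.

(* The uniform part keeps every edge in the support, which therefore stays connected. *)
Definition mixed_weight (q : {set V} -> R) (t : R) (e : {set V}) : R :=
  D2 * (t * q e + (1 - t) / #|E|%:R) / d e ^+ 2.

Lemma mixed_weight_admissible q t : distribution E q -> 0 <= t < 1 ->
  admissible_edge_weight E d (mixed_weight q t).
Proof.
case=> q_ge0 q_sum /andP[t_ge0 t_lt1].
have E_gt0 : 0 < #|E|%:R :> R by rewrite ltr0n card_edges_gt0.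
have mixed_gt0 e : e \in E -> 0 < mixed_weight q t e.
  move=> eE; rewrite divr_gt0 ?exprn_gt0 ?d_gt0 // mulr_gt0 ?Dsq_gt0 //.
  by rewrite ltr_wpDl ?mulr_ge0 ?q_ge0 // divr_gt0 // subr_gt0.
split=> [e /mixed_gt0/ltW //|]; split.
  suff -> : support_edges E (mixed_weight q t) = E by [].
  by apply/setP => e; rewrite inE andb_idr // => /mixed_gt0.
rewrite (eq_bigr (fun e => D2 * (t * q e + (1 - t) / #|E|%:R))) => [|e eE]; last first.
  by rewrite divfK // expf_neq0 // gt_eqF ?d_gt0.
rewrite -mulr_sumr big_split /= -mulr_sumr q_sum sumr_const -(mulr_natr ((1 - t) / _)).
by rewrite divfK ?gt_eqF // mulr1 addrC subrK mulr1.
Qed.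

Lemma mixed_weight_ge q t e : t <= 1 -> e \in E ->
  D2 * t * q e / d e ^+ 2 <= mixed_weight q t e.
Proof.
move=> t_le1 eE; rewrite ler_wpM2r ?invr_ge0 ?sqr_ge0 // -mulrA ler_wpM2l ?Dsq_ge0 //.
by rewrite lerDl divr_ge0 ?subr_ge0.
Qed.

Lemma best_response q w : distribution E q -> sigma E m0 d / D2 < w ->
  exists2 g, normalized g & \sum_(e in E) q e * (edge_energy g e / d e ^+ 2) <= w.
Proof.
move=> q_dist; have D2_gt0 := Dsq_gt0; have sigma_pos := sigma_gt0.
rewrite ltr_pdivrMr // => sigma_lt; set s := w * D2 in sigma_lt.
have w_gt0 : 0 < w by rewrite -(pmulr_lgt0 _ D2_gt0) (lt_trans sigma_pos).
set r := (sigma E m0 d + s) / 2.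
have [sigma_lt_r r_lt_s] : sigma E m0 d < r /\ r < s by rewrite /r; split; lra.
have r_gt0 : 0 < r := lt_trans sigma_pos sigma_lt_r.
have s_gt0 : 0 < s := lt_trans r_gt0 r_lt_s.
have t_range : 0 <= r / s < 1.
  by rewrite divr_ge0 ?(ltW r_gt0) ?(ltW s_gt0) //= (ltr_pdivrMr _ _ s_gt0) mul1r.
set m1 := mixed_weight q (r / s).
have lambda1_lt : lambda1 E m0 m1 < r.
  exact: le_lt_trans (lambda1_le_sigma (mixed_weight_admissible q_dist t_range)) sigma_lt_r.
have [|_ [f fnc <-] f_lt] := inf_lt _ lambda1_lt.
  by have [f fnc] := exists_nonconstant; exists (rayleigh E m0 m1 f), f.
have [g g_norm gE] := normalize fnc; exists g => //.
suff : r / w * \sum_(e in E) q e * (edge_energy g e / d e ^+ 2) < r.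
  rewrite -(ltr_pdivlMl _ _ (divr_gt0 r_gt0 w_gt0)) => /ltW.
  by have -> : (r / w)^-1 * r = w by field; rewrite !gt_eqF.
apply: le_lt_trans f_lt; rewrite rayleighE mulr_suml mulr_sumr.
apply: ler_sum => e eE; rewrite -(mulrA (m1 e)) -gE.
have -> : r / w * (q e * (edge_energy g e / d e ^+ 2))
    = D2 * (r / s) * q e / d e ^+ 2 * edge_energy g e.
  by rewrite /s; field; rewrite !gt_eqF ?d_gt0.
by rewrite ler_wpM2r ?edge_energy_ge0 ?mixed_weight_ge //; case/andP: t_range => _ /ltW.
Qed.

Lemma payoff_bound_gt0 : 0 < payoff_bound.
Proof.
have [e eE] := card_gt0P card_edges_gt0; have [u _] := card_gt0P V_gt0.
rewrite !mulr_gt0 //.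
  apply: lt_le_trans (ler_sum_term (F := fun u => (m0 u)^-1) _ (isT : xpredT u)).
    by rewrite invr_gt0.
  by move=> v _; rewrite invr_ge0 ltW.
apply: lt_le_trans (ler_sum_term (F := fun e => (d e ^+ 2)^-1) _ eE).
  by rewrite invr_gt0 exprn_gt0 ?d_gt0.
by move=> f _; rewrite invr_ge0 sqr_ge0.
Qed.

Lemma normalized_plays v eta : sigma E m0 d / D2 < v -> 0 < eta -> eta <= 2^-1 ->
  exists gs : nat -> V -> R, (forall t, normalized (gs t)) /\
    forall N e, e \in E -> \sum_(t < N) edge_energy (gs t) e <=
      d e ^+ 2 * (N%:R * v + payoff_bound * #|E|%:R / eta + 2 * payoff_bound * eta * N%:R).
Proof.
move=> v_gt eta_gt0 eta_le; set B := payoff_bound; have B_gt0 := payoff_bound_gt0.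
have [||gs [gs_norm regret]] := multiplicative_weights
    (good := normalized) (payoff := fun g e => edge_energy g e / d e ^+ 2 / B) (v := v / B)
    card_edges_gt0 eta_gt0 eta_le.
- move=> g e g_norm eE; have := divr_ge0 (edge_energy_ge0 g e) (sqr_ge0 (d e)).
  by move=> P_ge0; rewrite divr_ge0 ?(ltW B_gt0) //= ler_pdivrMr // mul1r payoff_le.
- move=> q q_dist; have [g g_norm g_le] := best_response q_dist v_gt; exists g; split=> //.
  under eq_bigr do rewrite mulrA.
  by rewrite -mulr_suml ler_pM2r ?invr_gt0.
exists gs; split=> // N e eE; have de_gt0 : 0 < d e ^+ 2 by rewrite exprn_gt0 ?d_gt0.
move: (regret N e eE); rewrite -!mulr_suml ler_pdivrMr // ler_pdivrMr //.
suff -> : (N%:R * (v / B) + #|E|%:R / eta + 2 * eta * N%:R) * B * d e ^+ 2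
  = d e ^+ 2 * (N%:R * v + B * #|E|%:R / eta + 2 * B * eta * N%:R) by [].
by field; rewrite !gt_eqF.
Qed.

Lemma exists_balanced w : sigma E m0 d / D2 < w ->
  exists chi : V -> 'rV[R]_#|V|, balanced w chi.
Proof.
move=> w_gt; set v := (sigma E m0 d / D2 + w) / 2; set gap := w - v.
have v_gt : sigma E m0 d / D2 < v by rewrite /v; lra.
have gap_gt0 : 0 < gap by rewrite /gap /v; lra.
(* eta and N make each regret term of normalized_plays at most N gap / 2. *)
set B := payoff_bound; have B_gt0 : 0 < B := payoff_bound_gt0.
have B4_gt0 : 0 < 4 * B by lra.
set eta := Num.min 2^-1 (gap / (4 * B)).
have eta_gt0 : 0 < eta by rewrite lt_min invr_gt0 ltr0n divr_gt0.
have eta_gap : 4 * B * eta <= gap.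
  by rewrite mulrC -ler_pdivlMr // ge_min lexx orbT.
have eta_le : eta <= 2^-1 by rewrite ge_min lexx.
have [gs [gs_norm gs_energy]] := normalized_plays v_gt eta_gt0 eta_le.
rewrite -/B in gs_energy.
set N := (Num.truncn (2 * B * #|E|%:R / (eta * gap))).+1 + #|V|.
have N_gt : 2 * B * #|E|%:R / (eta * gap) < N%:R.
  by apply: lt_le_trans (truncnS_gt _) _; rewrite ler_nat leq_addr.
have N_ge0 : 0 <= N%:R :> R := ler0n _ _.
have rows_bal : balanced w (fun u => \row_(t < N) (gs t u / Num.sqrt N%:R)).
  apply: balanced_rows => // e eE.
  apply: le_trans (gs_energy N e eE) _; rewrite [X in _ <= X]mulrC ler_wpM2l ?sqr_ge0 //.
  have : B * #|E|%:R / eta <= N%:R * gap / 2.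
    move: N_gt; rewrite ltr_pdivrMr ?mulr_gt0 // ler_pdivrMr //; lra.
  have : 2 * B * eta * N%:R <= N%:R * gap / 2 by nra.
  rewrite /gap; lra.
have [chi gram] := same_gram_reduce (fun u => \row_(t < N) (gs t u / Num.sqrt N%:R)).
by exists chi; apply: same_gram_balanced gram rows_bal.
Qed.

Lemma delta_le_balanced w : sigma E m0 d / D2 < w ->
  delta E m0 d <= Num.max (1 - (M * w)^-1) 0.
Proof.
move=> w_gt; have w_gt0 : 0 < w := lt_trans (divr_gt0 sigma_gt0 Dsq_gt0) w_gt.
have [chi chi_bal] := exists_balanced w_gt.
have [phi [phi_adm <-]] := admissible_of_balanced w_gt0 chi_bal.
exact: delta_le_bar.
Qed.

Lemma delta_le_bound_nontrivial : delta E m0 d <= spectral_bound.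
Proof.
set v := sigma E m0 d / D2; have v_gt0 : 0 < v := divr_gt0 sigma_gt0 Dsq_gt0.
have M_gt0 := total_mass_gt0.
apply/ler_addgt0Pr => eps eps_gt0; set w := v + eps * M * v ^+ 2.
have w_gt : v < w by rewrite ltrDl (mulr_gt0 (mulr_gt0 eps_gt0 M_gt0) (exprn_gt0 2 v_gt0)).
apply: (le_trans (delta_le_balanced w_gt)).
have -> : D2 / M / sigma E m0 d = (M * v)^-1.
  by rewrite /v; field; rewrite !gt_eqF ?sigma_gt0 ?Dsq_gt0.
have gap : (M * v)^-1 - (M * w)^-1 = eps * (v / w).
  by rewrite /w; field; rewrite !gt_eqF // (lt_trans v_gt0 w_gt).
have vw_le1 : v / w <= 1 by rewrite ler_pdivrMr ?mul1r ?ltW // (lt_trans v_gt0 w_gt).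
rewrite ge_max addr_ge0 ?le_max ?lexx ?orbT ?(ltW eps_gt0) // andbT.
have max_ge : 1 - (M * v)^-1 <= Num.max (1 - (M * v)^-1) 0 by rewrite le_max lexx.
nra.
Qed.

End Nontrivial.

Section Trivial.
Hypothesis V_le1 : (#|V| <= 1)%N.

Lemma Dsq_trivial : D2 = 0.
Proof.
rewrite /Dsq big_pred0 // => e; apply/negbTE/negP => /E_simple e2.
by have := leq_trans (max_card (mem e)) V_le1; rewrite e2.
Qed.

Lemma variance_trivial f : variance f = 0.
Proof.
apply: variance_eq0 => -[u [v fuv]].
move: V_le1; rewrite leqNgt => /negP; apply; apply/card_gt1P; exists u, v.
by split=> //; apply: contraNneq fuv => ->.
Qed.

Lemma delta_le_bound_trivial : delta E m0 d <= spectral_bound.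
Proof.
apply: le_trans (delta_le_bar unit_row_admissible) _.
by rewrite enorm_bar_unit_row Dsq_trivial !mul0r subr0 le_max lexx.
Qed.

End Trivial.

Lemma bound_le_bar (phi : V -> 'rV[R]_#|V|) : admissible_embedding E m0 d phi ->
  spectral_bound <= enorm (bar m0 phi) ^+ 2.
Proof.
move=> phi_adm; set W := \sum_i variance (coord phi i).
have M_gt0 := total_mass_gt0.
have mass : M * sqnorm (bar m0 phi) + W = M.
  by rewrite -sum_mass_sqnorm -phi_adm.1; apply: eq_bigr => u _; rewrite enorm_sqr.
have barE : enorm (bar m0 phi) ^+ 2 = 1 - W / M.
  have -> : 1 - W / M = (M - W) / M by field; rewrite gt_eqF.
  by rewrite enorm_sqr -{1}mass addrK mulrC mulKf ?gt_eqF.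
rewrite barE ge_max; apply/andP; split; last first.
  by rewrite subr_ge0 ler_pdivrMr // mul1r -mass lerDr mulr_ge0 ?sqnorm_ge0 ?ltW.
rewrite lerB // mulrAC ler_pM2r ?invr_gt0 //.
case: (leqP #|V| 1) => [V_le1|V_gt1].
  by rewrite /W big1 ?Dsq_trivial ?mul0r // => i _; exact: variance_trivial.
by rewrite ler_pdivlMr ?sigma_gt0 //; exact: coord_variance_sigma_le.
Qed.

Lemma delta_le_bound : delta E m0 d <= spectral_bound.
Proof.
case: (leqP #|V| 1) => [V_le1|V_gt1]; first exact: delta_le_bound_trivial.
exact: delta_le_bound_nontrivial.
Qed.

Lemma bound_le_delta : spectral_bound <= delta E m0 d.
Proof.
apply: lb_le_inf => [|_ [phi phi_adm <-]]; last exact: bound_le_bar.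
exists (enorm (bar m0 (fun=> unit_row)) ^+ 2), (fun=> unit_row) => //.
exact: unit_row_admissible.
Qed.

End Spectral.

Theorem corollary2p5 (R : realType) (V : finType) (E : {set {set V}})
    (m0 : V -> R) (d : {set V} -> R) :
  (0 < #|V|)%N ->
  simple_graph E ->
  connected_graph E ->
  (forall u, 0 < m0 u) ->
  (forall e, e \in E -> 0 < d e) ->
  delta E m0 d =
    Num.max (1 - (Dsq E d / total_mass m0) / sigma E m0 d) 0.
Proof.
move=> V_gt0 E_simple E_connected m0_gt0 d_gt0.
apply/le_anti/andP; split; first exact: delta_le_bound.
exact: bound_le_delta.
Qed.
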